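(* Let $\Sigma$ be an alphabet with $|\Sigma|\geq 3$ and $n\geq 1$. If $g\colon\mathcal{T}(\Sigma)^n\to\mathcal{T}(\Sigma)$ is WCP, then there exists a polynomial $P_g(x_1,\ldots,x_n)$ such that $g(\vec u)=\widetilde{P_g}(\vec u)$ for all $\vec u\in\Sigma^n$.
   Context: Let $\Sigma$ be an alphabet not containing $0,1$. A binary tree over $\Sigma$ is a finite set $t \subseteq \{0,1\}^*\Sigma$ such that for any $ua, vb \in t$ with $ua \neq vb$, $u$ is not a prefix of $v$ and $v$ is not a prefix of $u$; $\mathcal{T}(\Sigma)$ is the set of such trees, $\mathbf 0=\emptyset$, each letter $a$ is identified with $\{a\}$, and $t\star t' = 0.t\cup 1.t'$. Every map $h\colon\Sigma\to\mathcal{T}(\Sigma)$ extends uniquely to an endomorphism of $\langle\mathcal{T}(\Sigma),\star\rangle$, still denoted $h$. A function $g\colon\mathcal{T}(\Sigma)^n\to\mathcal{T}(\Sigma)$ is WCP if for every idempotent mapping $h\colon\Sigma\to\Sigma$ and all $\vec u,\vec v\in\Sigma^n$, $h(\vec u)=h(\vec v)$ implies $h(g(\vec u))=h(g(\vec v))$, where $h(\langle u_1,\ldots,u_n\rangle)=\langle h(u_1),\ldots,h(u_n)\rangle$. Let $x_1,\ldots,x_n\notin\Sigma$ be variables. A polynomial $P(x_1,\ldots,x_n)$ is a tree over the alphabet $\Sigma\cup\{x_1,\ldots,x_n\}$; its polynomial function $\widetilde P\colon\mathcal{T}(\Sigma)^n\to\mathcal{T}(\Sigma)$ is defined, for $\vec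 u=\langle t_1,\ldots,t_n\rangle$, by $\widetilde P(\vec u)=P$ if $P=\mathbf 0$ or $P\in\Sigma$; $\widetilde P(\vec u)=t_i$ if $P=x_i$; $\widetilde P(\vec u)=\widetilde{P_1}(\vec u)\star\widetilde{P_2}(\vec u)$ if $P=P_1\star P_2$. *)

From HB Require Import structures.
From mathcomp Require Import all_boot.
From mathcomp Require Import finmap.

Set Implicit Arguments.
Unset Strict Implicit.
Unset Printing Implicit Defensive.

Local Open Scope fset_scope.

(* A word of {0,1}^* A is a pair (w, a) with w : seq bool (false = 0,
   true = 1) and a : A.  A raw set of such words: *)
Definition rawtree (A : choiceType) := {fset (seq bool * A)}.

Definition is_tree (A : choiceType) (t : rawtree A) : bool :=
  all (fun x => all (fun y => (x != y) ==> ~~ prefix x.1 y.1) (enum_fset t))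
      (enum_fset t).

Record tree (A : choiceType) := Tree { tset :> rawtree A; tsetP : is_tree tset }.

(* the letter a, identified with the tree {a} *)
Lemma leaf_tree (A : choiceType) (a : A) : is_tree [fset ([::], a)].
Proof.
rewrite /is_tree; apply/allP => x /[!in_fset1] /eqP ->.
by apply/allP => y /[!in_fset1] /eqP ->; rewrite eqxx.
Qed.
Definition leaf (A : choiceType) (a : A) : tree A := Tree (leaf_tree a).

Definition rstar (A : choiceType) (t t' : rawtree A) : rawtree A :=
  [fset (false :: x.1, x.2) | x in t] `|` [fset (true :: x.1, x.2) | x in t'].

(* The endomorphism extension of a letter-to-letter map h : A -> A
   (i.e. of a -> {h a}): it relabels every leaf, h(t) = {w (h a) | wa in t}. *)
Definition tmap (A : choiceType) (h : A -> A) (t : rawtree A) : rawtree A :=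
  [fset (x.1, h x.2) | x in t].

Definition WCP (S : choiceType) (n : nat) (g : ('I_n -> tree S) -> tree S) : Prop :=
  forall h : S -> S, (forall a, h (h a) = h a) ->
  forall u v : 'I_n -> S, (forall i, h (u i) = h (v i)) ->
  tmap h (g (fun i => leaf (u i))) = tmap h (g (fun i => leaf (v i))).

(* Polynomials: trees over S + {x_1..x_n} (inl a = letter a, inr i = x_i). *)
Definition poly_tree (S : choiceType) (n : nat) := tree (S + 'I_n)%type.

Definition rsub (B : choiceType) (b : bool) (P : rawtree B) : rawtree B :=
  [fset (behead x.1, x.2) | x in P & ohead x.1 == Some b].

Definition depth (B : choiceType) (P : rawtree B) : nat :=
  \max_(x <- enum_fset P) size x.1.

(* Recursive evaluation following the paper's clauses:
   P = 0 -> 0 ; P = a -> a ; P = x_i -> t_i ; P = P0 * P1 -> ev P0 * ev P1.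
   (k is fuel, always sufficient when k = depth P + 1.) *)
Fixpoint peval_rec (S : choiceType) (n : nat) (k : nat)
    (P : rawtree (S + 'I_n)%type) (ts : 'I_n -> rawtree S) : rawtree S :=
  match k with
  | 0 => fset0
  | k'.+1 =>
    if P == fset0 then fset0 else
    match [seq x <- enum_fset P | x.1 == [::]] with
    | c :: _ => match c.2 with inl a => [fset ([::], a)] | inr i => ts i end
    | [::] => rstar (peval_rec k' (rsub false P) ts) (peval_rec k' (rsub true P) ts)
    end
  end.

Definition peval (S : choiceType) (n : nat) (P : poly_tree S n)
    (ts : 'I_n -> tree S) : rawtree S :=
  peval_rec (depth (tset P)).+1 (tset P) (fun i => tset (ts i)).

From mathcomp Require Import all_boot.
From mathcomp Require Import finmap.
From Stdlib Require Import Classical IndefiniteDescription.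

Set Implicit Arguments.
Unset Strict Implicit.
Unset Printing Implicit Defensive.

(* Applied to constant maps h, WCP says that all the trees g u, for u a vector
   of letters, have the same shape; applied to arbitrary idempotent maps, it
   says that the letter g u carries at a fixed leaf position is a function
   f u of u with the same property.  Given three letters, such an f is either
   constant or conservative (f u is always some u j).  In the conservative
   case, whether f u = x depends only on the fiber of u over x, through a
   family of "decisive" sets of coordinates that does not depend on x.  Coloring
   with three letters shows that this family contains exactly one of X and
   its complement and is additive on disjoint unions: it is an ultrafilter on
   the finite set of coordinates, hence principal, and f is a projection.
   Labelling each leaf of the common shape by the corresponding letter or
   variable gives the polynomial. *)

Definition interp (S : Type) n (u : 'I_n -> S) (l : (S + 'I_n)%type) : S :=
  match l with inl a => a | inr i => u i end.

Section LetterFunctions.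
Variables (S : finType) (n : nat).
Hypothesis S_gt2 : 2 < #|S|.
Implicit Types (u v : 'I_n -> S) (x y b c : S) (X Z A B : {set 'I_n}).

Lemma avoid2 x y : exists c, (c != x) && (c != y).
Proof.
have [c | no_c] := pickP [pred c | (c != x) && (c != y)]; first by exists c.
suff : #|S| <= 2 by rewrite leqNgt S_gt2.
apply: leq_trans (card_size [:: x; y]); apply/subset_leq_card/subsetP => c _.
by have := no_c c; rewrite !inE /=; case: (c == x); case: (c == y).
Qed.

Definition letterWCP (f : ('I_n -> S) -> S) :=
  forall h : S -> S, idempotent_fun h ->
  forall u v, (forall i, h (u i) = h (v i)) -> h (f u) = h (f v).

Definition fiber u x := [set i | u i == x].

Definition color2 x b X i := if i \in X then x else b.

Definition color3 x y z A B i := if i \in A then x else if i \in B then y else z.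

Lemma fiber_color2 x b X : b != x -> fiber (color2 x b X) x = X.
Proof.
move=> bx; apply/setP => i; rewrite inE /color2.
by case: (i \in X); rewrite ?eqxx ?(negbTE bx).
Qed.

Variable f : ('I_n -> S) -> S.
Hypothesis f_wcp : letterWCP f.

Lemma letterWCP_ext u v : u =1 v -> f u = f v.
Proof. by move=> uv; apply: (f_wcp (h := id)) => // i; rewrite uv. Qed.

Lemma f_eq_fiber u v x : fiber u x = fiber v x -> (f u == x) = (f v == x).
Proof.
move=> /setP uv; have [b /andP[bx _]] := avoid2 x x.
pose h y := if y == x then x else b.
have h_eq y : (h y == x) = (y == x).
  by rewrite /h; case: (y =P x) => _; rewrite ?eqxx ?(negbTE bx).
have h_idem : idempotent_fun h by move=> y; rewrite /= {1}/h h_eq.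
rewrite -h_eq -[RHS]h_eq; congr (_ == x); apply: f_wcp => // i.
by have := uv i; rewrite !inE /h => ->.
Qed.

Lemma letterWCP_const u : (forall j, f u != u j) -> forall v, f v = f u.
Proof.
set b := f u => fu_new.
have avoid_b v : (forall j, v j != b) -> f v = b.
  move=> vb; apply/eqP; rewrite (@f_eq_fiber v u b) ?eqxx //.
  by apply/setP => i; rewrite !inE (negbTE (vb i)) eq_sym (negbTE (fu_new i)).
have two_values v c : c != b -> (f v == b) || (f v == c).
  move=> cb; pose w j := if v j == b then c else v j.
  have fw : f w = b by apply: avoid_b => j; rewrite /w; case: (v j =P b) => // /eqP.
  pose h y := if y == b then c else y.
  have h_idem : idempotent_fun h.
    move=> y; rewrite /= /h.
    by case: (y =P b) => [_ | /eqP/negbTE ->]; rewrite ?(negbTE cb).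
  have hfv : h (f v) = c.
    rewrite (f_wcp h_idem (v := w)); first by rewrite fw /h eqxx.
    move=> i; rewrite /w.
    by case: (v i =P b) => [->|//]; rewrite /h eqxx (negbTE cb).
  by move: hfv; rewrite /h; case: eqP => // _ ->; rewrite eqxx.
have [c /andP[cb _]] := avoid2 b b; have [d /andP[db dc]] := avoid2 b c.
move=> v; have := two_values v c cb; have := two_values v d db.
by case: eqP => //= _ /eqP fvd /eqP fvc; move: dc; rewrite -fvd fvc eqxx.
Qed.

Section Conservative.
Hypothesis f_cons : forall u, exists j, f u = u j.

Lemma f_color2_compl x b X :
  b != x -> (f (color2 x b X) == x) = ~~ (f (color2 b x (~: X)) == b).
Proof.
move=> bx; rewrite (@letterWCP_ext (color2 b x (~: X)) (color2 x b X)); last first.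
  by move=> i; rewrite /color2 inE; case: (i \in X).
have [j ->] := f_cons (color2 x b X); rewrite /color2.
by case: (j \in X); rewrite eqxx ?(negbTE bx) // eq_sym bx.
Qed.

Lemma f_eq_fiber_neutral u v x y : fiber u x = fiber v y -> (f u == x) = (f v == y).
Proof.
set X := fiber v y => uv; have [c /andP[cx cy]] := avoid2 x y.
rewrite (@f_eq_fiber _ (color2 x c X)) ?fiber_color2 // f_color2_compl //.
rewrite (@f_eq_fiber _ (color2 c y (~: X))) ?fiber_color2 ?(eq_sym x) ?(eq_sym y) //.
by rewrite -f_color2_compl // (@f_eq_fiber _ v) ?fiber_color2.
Qed.

Variables a b : S.
Hypothesis ba : b != a.

Definition decisive X := f (color2 a b X) == a.

Lemma f_eq_decisive u x : (f u == x) = decisive (fiber u x).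
Proof. by apply: f_eq_fiber_neutral; rewrite fiber_color2. Qed.

Lemma decisiveT : decisive setT.
Proof.
have [j fa] := f_cons (fun=> a).
have -> : setT = fiber (fun=> a) a by apply/setP => i; rewrite !inE eqxx.
by rewrite -f_eq_decisive fa.
Qed.

Lemma decisiveC X : decisive (~: X) = ~~ decisive X.
Proof.
by rewrite {2}/decisive f_color2_compl // negbK f_eq_decisive fiber_color2 // eq_sym.
Qed.

Lemma decisiveU A B : [disjoint A & B] -> decisive (A :|: B) = decisive A || decisive B.
Proof.
move=> AB; have [c /andP[ca cb]] := avoid2 a b.
pose u := color3 a b c A B.
have fiber_a : fiber u a = A.
  apply/setP => i; rewrite !inE /u /color3.
  by case: (i \in A); case: (i \in B); rewrite ?eqxx // ?(negbTE ba) ?(negbTE ca).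
have fiber_b : fiber u b = B.
  apply/setP => i; rewrite !inE /u /color3.
  case iA: (i \in A); first by rewrite (disjointFr AB iA) eq_sym (negbTE ba).
  by case: (i \in B); rewrite ?eqxx // (negbTE cb).
have fiber_c : fiber u c = ~: (A :|: B).
  apply/setP => i; rewrite !inE /u /color3.
  by case: (i \in A); case: (i \in B); rewrite ?eqxx // eq_sym ?(negbTE ca) ?(negbTE cb).
rewrite -[A :|: B]setCK decisiveC -fiber_c -fiber_a -fiber_b -!f_eq_decisive.
have [j ->] := f_cons u; rewrite /u /color3.
by case: (j \in A); case: (j \in B);
  rewrite eqxx ?orbT //= ?(negbTE ca) ?(negbTE cb) // eq_sym ?ca ?cb.
Qed.

Lemma decisive_split (i0 : 'I_n) Z :
  i0 \in Z -> decisive Z = decisive [set i0] || decisive (Z :\ i0).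
Proof. by move=> i0Z; rewrite -{1}(setD1K i0Z) decisiveU // disjoints1 setD11. Qed.

Lemma decisive_set1 : exists i0, decisive [set i0].
Proof.
have [X decX X_min] := arg_minnP (fun X => #|X|) decisiveT.
have /set0Pn[i0 i0X] : X != set0.
  by apply: contraTneq decX => ->; rewrite -setCT decisiveC decisiveT.
exists i0; move: decX; rewrite (decisive_split i0X); case: decisive => //= /X_min.
by rewrite leqNgt proper_card ?properD1.
Qed.

Lemma conservative_proj : exists i0, forall u, f u = u i0.
Proof.
have [i0 dec_i0] := decisive_set1; exists i0 => u; apply/eqP.
by rewrite f_eq_decisive (@decisive_split i0) ?dec_i0 ?inE.
Qed.

End Conservative.

Lemma letterWCP_const_or_proj : exists l : S + 'I_n, forall u, f u = interp u l.
Proof.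
have [[u fu_new] | not_new] := classic (exists u, forall j, f u != u j).
  by exists (inl (f u)) => v; apply: letterWCP_const.
have f_cons u : exists j, f u = u j.
  apply: NNPP => no_j; apply: not_new; exists u => j.
  by apply/eqP => fu; apply: no_j; exists j.
have /card_gt0P[a _] : 0 < #|S| by apply: leq_trans S_gt2.
have [b /andP[ba _]] := avoid2 a a.
by have [i0 f_i0] := conservative_proj f_cons ba; exists (inr i0).
Qed.

End LetterFunctions.

Local Open Scope fset_scope.

Lemma treeP (A : choiceType) (t : rawtree A) :
  reflect (forall x y, x \in t -> y \in t -> x != y -> ~~ prefix x.1 y.1) (is_tree t).
Proof.
apply: (iffP allP) => [tP x y xt yt xy | tP x xt].
  by have /allP/(_ y yt) := tP x xt; rewrite xy.
by apply/allP => y yt; apply/implyP; apply: tP.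
Qed.

Section Trees.
Variable A : choiceType.
Implicit Types (t : rawtree A) (w : seq bool).

Lemma tree_label_uniq t w a b : is_tree t -> (w, a) \in t -> (w, b) \in t -> a = b.
Proof.
move=> /treeP tP wa wb; apply/eqP/negPn/negP => ab.
by have := tP _ _ wa wb; rewrite xpair_eqE eqxx ab prefix_refl => /(_ isT).
Qed.

Lemma tree_root t a : is_tree t -> ([::], a) \in t -> t = [fset ([::], a)].
Proof.
move=> /treeP tP ra; apply/fsetP => y; rewrite in_fset1.
apply/idP/eqP => [yt | -> //]; apply/eqP/negPn/negP => ya.
by have := tP _ _ ra yt; rewrite eq_sym ya prefix0s => /(_ isT).
Qed.

Lemma mem_rsub b t w a : ((w, a) \in rsub b t) = ((b :: w, a) \in t).
Proof.
apply/(imfsetP _ _ _ _)/idP => [[[[|c v] d]] | wa]; rewrite ?inE //=.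
- by case/andP.
- by case/andP=> vd /eqP[<-] [-> ->].
- by exists (b :: w, a); rewrite ?inE /= ?wa ?eqxx.
Qed.

Lemma rsub_tree b t : is_tree t -> is_tree (rsub b t).
Proof.
move=> /treeP tP; apply/treeP => -[v a] [w c]; rewrite !mem_rsub => va wc vw.
by have := tP _ _ va wc; rewrite prefix_cons eqxx; apply; apply: contraNneq vw => -[-> ->].
Qed.

Lemma mem_rstar t0 t1 w a :
  ((w, a) \in rstar t0 t1) =
  if w is b :: v then (v, a) \in (if b then t1 else t0) else false.
Proof.
rewrite in_fsetU; apply/orP/idP => [[] /imfsetP[[v c] /= vc [-> ->]] // | ].
case: w => [|[] v] // va; [right | left]; by apply/imfsetP; exists (v, a).
Qed.

Lemma rstar_rsub t :
  (forall a, ([::], a) \notin t) -> rstar (rsub false t) (rsub true t) = t.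
Proof.
move=> t_noroot; apply/fsetP => -[[|[] w] a];
  by rewrite mem_rstar ?mem_rsub ?(negbTE (t_noroot a)).
Qed.

End Trees.

Section Relabel.
Variables A B : choiceType.

Definition relabel (k : seq bool -> A -> B) (t : rawtree A) : rawtree B :=
  [fset (x.1, k x.1 x.2) | x in t].

Lemma relabelP (k : seq bool -> A -> B) (t : rawtree A) w c :
  reflect (exists2 a, (w, a) \in t & c = k w a) ((w, c) \in relabel k t).
Proof.
apply: (iffP (imfsetP _ _ _ _)) => [[[v a] /= va [-> ->]] | [a wa ->]]; first by exists a.
by exists (w, a).
Qed.

Lemma relabel_tree (k : seq bool -> A -> B) (t : rawtree A) :
  is_tree t -> is_tree (relabel k t).
Proof.
move=> /treeP tP; apply/treeP => _ _ /imfsetP[x xt ->] /imfsetP[y yt ->] xy /=.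
by apply: tP => //; apply: contraNneq xy => ->.
Qed.

Lemma relabel_rstar (k : A -> B) (t0 t1 : rawtree A) :
  relabel (fun=> k) (rstar t0 t1) = rstar (relabel (fun=> k) t0) (relabel (fun=> k) t1).
Proof.
apply/fsetP => -[w c]; rewrite mem_rstar.
case: w => [|b v]; first by apply/relabelP => -[a]; rewrite mem_rstar.
apply/relabelP/idP => [[a + ->] | ]; rewrite ?mem_rstar.
- by case: b => va; apply/relabelP; exists a.
- by case: b => /relabelP[a va ->]; exists a; rewrite ?mem_rstar.
Qed.

End Relabel.

Section Labels.
Variable A : finType.
Implicit Types (t : rawtree A) (w : seq bool).

Definition label t w : option A := [pick a | (w, a) \in t].

Lemma label_mem t w a : label t w = Some a -> (w, a) \in t.
Proof. by rewrite /label; case: pickP => // b wb [<-]. Qed.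

Lemma label_None t w a : label t w = None -> (w, a) \notin t.
Proof. by rewrite /label; case: pickP => // /(_ a) ->. Qed.

Lemma labelE t w a : is_tree t -> (w, a) \in t -> label t w = Some a.
Proof.
rewrite /label => tP wa; case: pickP => [b wb | /(_ a)]; last by rewrite wa.
by rewrite (tree_label_uniq tP wa wb).
Qed.

Lemma tree_ext t1 t2 : is_tree t1 -> is_tree t2 -> label t1 =1 label t2 -> t1 = t2.
Proof.
move=> t1P t2P eq_label; apply/fsetP => -[w a].
apply/idP/idP => wa; apply: label_mem.
- by rewrite -eq_label (labelE t1P wa).
- by rewrite eq_label (labelE t2P wa).
Qed.

End Labels.

Lemma label_relabel (A B : finType) (k : seq bool -> A -> B) (t : rawtree A) w :
  is_tree t -> label (relabel k t) w = omap (k w) (label t w).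
Proof.
move=> tP; case E: (label t w) => [a|] /=.
  by apply: labelE; [exact: relabel_tree | apply/relabelP; exists a; rewrite ?label_mem].
rewrite /label; case: pickP => // c /relabelP[a wa _].
by have := label_None a E; rewrite wa.
Qed.

Lemma peval_rec_leaves (S : choiceType) n (u : 'I_n -> S) k
    (P : rawtree (S + 'I_n)%type) :
  is_tree P -> (forall x, x \in P -> size x.1 < k) ->
  peval_rec k P (fun i => [fset ([::], u i)]) = relabel (fun=> interp u) P.
Proof.
elim: k P => [|k IH] P tP P_lt.
  suff -> : P = fset0 by rewrite /relabel imfset0.
  by apply/fsetP => x; rewrite inE; apply/negbTE/negP => /P_lt.
rewrite /=; case: eqP => [-> | _]; first by rewrite /relabel imfset0.
case E: [seq x <- enum_fset P | x.1 == [::]] => [|[w l] r].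
  have P_noroot a : ([::], a) \notin P.
    apply/negP => ra.
    have : ([::], a) \in [seq x <- enum_fset P | x.1 == [::]] by rewrite mem_filter eqxx.
    by rewrite E.
  have rsub_lt b x : x \in rsub b P -> size x.1 < k.
    by case: x => v a; rewrite mem_rsub => /P_lt.
  have {}IH b := IH _ (rsub_tree b tP) (rsub_lt b).
  by rewrite !IH -[in RHS](rstar_rsub P_noroot) relabel_rstar.
have : (w, l) \in [seq x <- enum_fset P | x.1 == [::]] by rewrite E mem_head.
rewrite mem_filter => /andP[/eqP /= w0 wl]; subst w.
by rewrite (tree_root tP wl) /relabel imfset_fset1; case: l {wl E}.
Qed.

Lemma peval_leaves (S : choiceType) n (P : poly_tree S n) (u : 'I_n -> S) :
  peval P (fun i => leaf (u i)) = relabel (fun=> interp u) P.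
Proof.
apply: peval_rec_leaves (tsetP P) _ => x xP.
by rewrite ltnS /depth; apply: (@leq_bigmax_seq _ _ xpredT (fun x => size x.1)).
Qed.

Section WCPFunctions.
Variables (S : finType) (n : nat) (g : ('I_n -> tree S) -> tree S).
Hypothesis g_wcp : WCP g.

Let G (u : 'I_n -> S) : rawtree S := g (fun i => leaf (u i)).

Lemma label_WCP h u v w : idempotent_fun h -> (forall i, h (u i) = h (v i)) ->
  omap h (label (G u) w) = omap h (label (G v) w).
Proof.
move=> h_idem huv; rewrite -!(label_relabel (fun=> h)) ?tsetP //.
by congr label; exact: g_wcp.
Qed.

Variable a0 : S.

(* The default a0 is only used at words w outside the common shape of the G u. *)
Definition letter_at w u := odflt a0 (label (G u) w).

Lemma letter_at_WCP w : letterWCP (letter_at w).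
Proof.
move=> h h_idem u v /(label_WCP w h_idem); rewrite /letter_at.
by case: label => [a|]; case: label => [b|] // [].
Qed.

Lemma label_letter_at u w :
  label (G u) w = omap (fun=> letter_at w u) (label (G (fun=> a0)) w).
Proof.
have := @label_WCP (fun=> a0) u (fun=> a0) w (fun=> erefl) (fun=> erefl).
by rewrite /letter_at; case: label => [a|]; case: label.
Qed.

End WCPFunctions.

Theorem mainTheorem10 (S : finType) (n : nat) :
  3 <= #|S| -> 0 < n ->
  forall g : ('I_n -> tree S) -> tree S, WCP g ->
  exists P : poly_tree S n,
    forall u : 'I_n -> S,
      tset (g (fun i => leaf (u i))) = peval P (fun i => leaf (u i)).
Proof.
move=> S_gt2 _ g g_wcp.
have /card_gt0P[a0 _] : 0 < #|S| by apply: leq_trans S_gt2.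
have [lab labP] := functional_choice
  (fun w l => forall u, letter_at g a0 w u = interp u l)
  (fun w => letterWCP_const_or_proj S_gt2 (letter_at_WCP g_wcp a0 w)).
exists (Tree (relabel_tree (fun w _ => lab w) (tsetP (g (fun=> leaf a0))))) => u.
rewrite peval_leaves; apply: tree_ext => [|/=|w]; first exact: tsetP.
  exact/relabel_tree/relabel_tree/tsetP.
rewrite (label_letter_at g_wcp a0) !label_relabel ?relabel_tree ?tsetP //.
by case: label => //= _; rewrite labP.
Qed.
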